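(* There exist non-symmetric operads of sets $P$ and $P'$ such that $P$ and $P'$ are not isomorphic as operads, but the monads on $\mathbf{Set}$ induced by $P$ and by $P'$ are isomorphic (as monads).
   Context: A non-symmetric operad of sets $P$ consists of sets $P(n)$ for $n\in\mathbb{N}$, an identity element $1\in P(1)$, and composition maps $P(n)\times P(k_1)\times\cdots\times P(k_n)\to P(k_1+\cdots+k_n)$, $(\theta,\theta_1,\dots,\theta_n)\mapsto \theta\circ(\theta_1,\dots,\theta_n)$, satisfying the usual associativity and unit axioms. A map of operads $f:P\to P'$ is a family of functions $f_n:P(n)\to P'(n)$ preserving identity and composition. The monad $(S,\mu,\eta)$ on $\mathbf{Set}$ induced by $P$ is given by $SX=\sum_{n\in\mathbb{N}}P(n)\times X^n$; $\eta_X:X\to SX$ sends $x$ to $(1,x)$; and $\mu_X:S^2X\to SX$ sends $(\theta,(\theta_1,x_1^1,\dots,x_1^{k_1}),\dots,(\theta_n,x_n^1,\dots,x_n^{k_n}))$ to $(\theta\circ(\theta_1,\dots,\theta_n),x_1^1,\dots,x_1^{k_1},\dots,x_n^1,\dots,x_n^{k_n})$. An isomorphism of monads $(S,\mu,\eta)\to(S',\mu',\eta')$ is a natural isomorphism $\iota:S\to S'$ with $\iota\eta=\eta'$ and $\iota_X\circ\mu_X=\mu'_X\circ\iota_{S'X}\circ S\iota_X$ for all sets $X$. *)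

From mathcomp Require Import all_boot.
Set Implicit Arguments.
Unset Strict Implicit.
Unset Printing Implicit Defensive.

(* Canonical (lexicographic) bijection 'I_(k_0+...+k_{n-1}) -> {i & 'I_(k i)}:
   the m-th element of the list (0,0),...,(0,k_0-1),(1,0),...  *)
Definition sum_list n (k : 'I_n -> nat) : seq {i : 'I_n & 'I_(k i)} :=
  flatten [seq [seq existT (fun i => 'I_(k i)) i j | j <- enum 'I_(k i)]
          | i <- enum 'I_n].

Lemma size_sum_list n (k : 'I_n -> nat) : size (sum_list k) == \sum_(i < n) k i.
Proof.
rewrite /sum_list size_flatten /shape -map_comp sumnE big_map big_enum /=.
by apply/eqP; apply: eq_bigr => i _; rewrite /= size_map size_enum_ord.
Qed.

Definition sum_split n (k : 'I_n -> nat) (m : 'I_(\sum_(i < n) k i)) :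
  {i : 'I_n & 'I_(k i)} := tnth (Tuple (size_sum_list k)) m.

(* Equations between elements of possibly different (but provably equal)
   arities are stated in the total type {n & op n}. *)
Record operad := Operad {
  op :> nat -> Type;
  op_id : op 1;
  op_comp : forall n, op n -> forall (k : 'I_n -> nat),
      (forall i, op (k i)) -> op (\sum_(i < n) k i);
  op_idl : forall k (y : op k),
      existT op _ (@op_comp 1%N op_id (fun _ => k) (fun _ => y)) = existT op k y;
  op_idr : forall n (x : op n),
      existT op _ (@op_comp n x (fun _ => 1%N) (fun _ => op_id)) = existT op n x;
  op_assoc : forall n (x : op n) (k : 'I_n -> nat) (y : forall i, op (k i))
      (l : forall i, 'I_(k i) -> nat) (z : forall i j, op (l i j)),
      existT op _ (@op_comp n x (fun i => \sum_(j < k i) l i j)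
                             (fun i => @op_comp (k i) (y i) (l i) (z i)))
      = existT op _ (@op_comp _ (@op_comp n x k y)
                       (fun m => l (tag (@sum_split n k m)) (tagged (@sum_split n k m)))
                       (fun m => z (tag (@sum_split n k m)) (tagged (@sum_split n k m))))
}.

Arguments op_id {o}.
Arguments op_comp {o n}.

Definition is_operad_map (P Q : operad) (f : forall n, P n -> Q n) : Prop :=
  f 1%N op_id = op_id /\
  forall n (x : P n) (k : 'I_n -> nat) (y : forall i, P (k i)),
    f _ (op_comp x k y) = op_comp (f n x) k (fun i => f _ (y i)).

Definition operad_iso (P Q : operad) : Prop :=
  exists (f : forall n, P n -> Q n) (g : forall n, Q n -> P n),
    is_operad_map f /\ is_operad_map g /\
    (forall n x, g n (f n x) = x) /\ (forall n x, f n (g n x) = x).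

Definition S (P : operad) (X : Type) : Type :=
  {n : nat & (P n * ('I_n -> X))%type}.

Definition Smap (P : operad) X Y (h : X -> Y) (s : S P X) : S P Y :=
  existT _ (tag s) ((tagged s).1, fun i => h ((tagged s).2 i)).

Definition eta (P : operad) X (x : X) : S P X :=
  existT _ 1%N (op_id, fun _ => x).

Definition mu (P : operad) X (s : S P (S P X)) : S P X :=
  let n := tag s in
  let th := (tagged s).1 in
  let f := (tagged s).2 in
  existT _ (\sum_(i < n) tag (f i))
    (op_comp th (fun i => tag (f i)) (fun i => (tagged (f i)).1),
     fun m => (tagged (f (tag (@sum_split n (fun i => tag (f i)) m)))).2
                (tagged (@sum_split n (fun i => tag (f i)) m))).

Definition monad_iso (P Q : operad) : Prop :=
  exists (iota : forall X, S P X -> S Q X) (jota : forall X, S Q X -> S P X),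
    (forall X Y (h : X -> Y) (s : S P X), iota Y (Smap h s) = Smap h (iota X s)) /\
    (forall X (s : S P X), jota X (iota X s) = s) /\
    (forall X (s : S Q X), iota X (jota X s) = s) /\
    (forall X (x : X), iota X (eta P x) = eta Q x) /\
    (forall X (s : S P (S P X)),
        iota X (mu s) = mu (iota (S Q X) (Smap (iota X) s))).

From mathcomp Require Import all_boot.
From Stdlib Require Import FunctionalExtensionality.

Set Implicit Arguments.
Unset Strict Implicit.
Unset Printing Implicit Defensive.

(* Reversing the inputs of every operation turns an operad P into an operad
   rev_operad P, and reversing argument lists is an isomorphism between the
   monads induced by P and by rev_operad P: the monad multiplication only
   concatenates argument lists, and reversal turns a concatenation of lists
   into the concatenation of the reversed lists in reverse order.
   In the parity operad (P(n) = Z/2 for n >= 1, P(0) empty, with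
   t o (t_1, ..., t_n) = t + t_1) a composite with unary operations depends
   only on the first of them; in its reverse it depends only on the last one.
   Operad isomorphisms preserve the first property, so the two operads are not
   isomorphic. *)

Lemma rev_enum_ord n : rev (enum 'I_n) = map (@rev_ord n) (enum 'I_n).
Proof.
apply: (inj_map val_inj); rewrite map_rev val_enum_ord -map_comp.
apply: (@eq_from_nth _ 0) => [|i]; rewrite size_rev size_iota.
  by rewrite size_map size_enum_ord.
move=> lt_i_n; rewrite nth_rev ?size_iota // nth_iota; last by rewrite subnSK // leq_subr.
by rewrite (nth_map (Ordinal lt_i_n)) ?size_enum_ord //= nth_enum_ord.
Qed.

Lemma sum_ord_gt0 n (k : 'I_n -> nat) (i : 'I_n) : 0 < k i -> 0 < \sum_(j < n) k j.
Proof. by move=> k_gt0; rewrite (bigD1 i) //= ltn_addr. Qed.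

Lemma sum_rev_ord n (k : 'I_n -> nat) : \sum_(i < n) k (rev_ord i) = \sum_(i < n) k i.
Proof. by rewrite [RHS](reindex_inj rev_ord_inj). Qed.

Lemma sum_splitE n (k : 'I_n -> nat) (x0 : {i : 'I_n & 'I_(k i)}) m :
  @sum_split n k m = nth x0 (sum_list k) m.
Proof. exact: tnth_nth. Qed.

Section SumSplit.
Variables (n : nat) (k : 'I_n -> nat).

Lemma sum_split_flatten_index (i : 'I_n) (j : 'I_(k i)) (m : 'I_(\sum_(i < n) k i)) :
  val m = flatten_index [seq k i | i <- enum 'I_n] i j -> @sum_split n k m = existT _ i j.
Proof.
move=> mE; rewrite (sum_splitE (existT _ i j)) /sum_list nth_flatten.
have -> : shape [seq [seq existT (fun i => 'I_(k i)) i j | j <- enum 'I_(k i)] | i <- enum 'I_n]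
          = [seq k i | i <- enum 'I_n].
  by rewrite /shape -map_comp; apply: eq_map => i' /=; rewrite size_map size_enum_ord.
have j_lt : j < nth 0 [seq k i | i <- enum 'I_n] i.
  by rewrite (nth_map i) ?size_enum_ord // nth_ord_enum.
rewrite mE flatten_indexKl // flatten_indexKr // (nth_map i) ?size_enum_ord // nth_ord_enum.
by rewrite (nth_map j) ?size_enum_ord // nth_ord_enum.
Qed.

Lemma big_sum_split R (idx : R) (op : Monoid.com_law idx) (F : {i : 'I_n & 'I_(k i)} -> R) :
  \big[op/idx]_(m < \sum_(i < n) k i) F (@sum_split n k m)
  = \big[op/idx]_(i < n) \big[op/idx]_(j < k i) F (existT _ i j).
Proof.
transitivity (\big[op/idx]_(p <- Tuple (size_sum_list k)) F p); first by rewrite big_tuple.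
rewrite /sum_list big_flatten big_map big_enum /=.
by apply: eq_bigr => i _; rewrite big_map big_enum.
Qed.

Definition rev_tag (p : {i : 'I_n & 'I_(k (rev_ord i))}) : {i : 'I_n & 'I_(k i)} :=
  existT _ (rev_ord (tag p)) (rev_ord (tagged p)).

Lemma rev_sum_list : rev (sum_list k) = map rev_tag (sum_list (fun i => k (rev_ord i))).
Proof.
rewrite /sum_list rev_flatten map_flatten -map_comp -map_rev rev_enum_ord -!map_comp.
congr flatten; apply: eq_map => i /=.
by rewrite -map_rev rev_enum_ord -!map_comp.
Qed.

Lemma sum_split_rev (m : 'I_(\sum_(i < n) k i)) :
  @sum_split n k (rev_ord m)
  = rev_tag (@sum_split n (fun i => k (rev_ord i)) (cast_ord (esym (sum_rev_ord k)) m)).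
Proof.
have p0 := @sum_split _ (fun i => k (rev_ord i)) (cast_ord (esym (sum_rev_ord k)) m).
rewrite (sum_splitE (rev_tag p0)) (sum_splitE p0) -(nth_map p0 (rev_tag p0)) -?rev_sum_list /=.
  by rewrite nth_rev (eqP (size_sum_list k)).
by rewrite (eqP (size_sum_list _)) sum_rev_ord.
Qed.

End SumSplit.

Lemma existT_ecast (A : nat -> Type) m n (e : m = n) (a : A m) :
  existT A n (ecast i (A i) e a) = existT A m a.
Proof. by case: n / e. Qed.

Section OperadComp.
Variable P : operad.

Lemma op_comp_congr n (x : P n) (k k' : 'I_n -> nat)
    (y : forall i, P (k i)) (y' : forall i, P (k' i)) :
  (forall i, existT P (k i) (y i) = existT P (k' i) (y' i)) ->
  existT P _ (op_comp x k y) = existT P _ (op_comp x k' y').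
Proof.
move=> /functional_extensionality yE.
pose comp (F : 'I_n -> {m & P m}) :=
  existT P _ (op_comp x (fun i => tag (F i)) (fun i => tagged (F i))).
exact (congr1 comp yE).
Qed.

Lemma op_comp_existT n n' (e : n = n') (x : P n) (x' : P n') (k : 'I_n -> nat)
    (k' : 'I_n' -> nat) (y : forall i, P (k i)) (y' : forall i, P (k' i)) :
  existT P n x = existT P n' x' ->
  (forall i, existT P (k i) (y i) = existT P (k' (cast_ord e i)) (y' (cast_ord e i))) ->
  existT P _ (op_comp x k y) = existT P _ (op_comp x' k' y').
Proof.
case: n' / e x' k' y' => x' k' y' /(@eq_from_Tagged _ P) <- yE.
by apply: op_comp_congr => i; rewrite yE cast_ord_id.
Qed.

End OperadComp.

Section ReverseOperad.
Variable P : operad.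

Definition rev_comp n (x : P n) (k : 'I_n -> nat) (y : forall i, P (k i)) :
    P (\sum_(i < n) k i) :=
  ecast m (P m) (sum_rev_ord k)
    (op_comp x (fun i => k (rev_ord i)) (fun i => y (rev_ord i))).
Arguments rev_comp {n} x k y.

Lemma rev_compE n (x : P n) k y :
  existT P _ (@rev_comp n x k y)
  = existT P _ (op_comp x (fun i => k (rev_ord i)) (fun i => y (rev_ord i))).
Proof. exact: existT_ecast. Qed.

Lemma rev_comp_idl k (y : P k) :
  existT P _ (@rev_comp 1 op_id (fun _ => k) (fun _ => y)) = existT P k y.
Proof. by rewrite rev_compE op_idl. Qed.

Lemma rev_comp_idr n (x : P n) :
  existT P _ (rev_comp x (fun _ => 1%N) (fun _ => op_id)) = existT P n x.
Proof. by rewrite rev_compE op_idr. Qed.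

Lemma rev_comp_assoc n (x : P n) (k : 'I_n -> nat) (y : forall i, P (k i))
    (l : forall i, 'I_(k i) -> nat) (z : forall i j, P (l i j)) :
  existT P _ (rev_comp x (fun i => \sum_(j < k i) l i j)
                         (fun i => rev_comp (y i) (l i) (z i)))
  = existT P _ (rev_comp (rev_comp x k y)
                  (fun m => l (tag (@sum_split n k m)) (tagged (@sum_split n k m)))
                  (fun m => z (tag (@sum_split n k m)) (tagged (@sum_split n k m)))).
Proof.
rewrite !rev_compE.
transitivity (existT P _ (op_comp x
    (fun i => \sum_(j < k (rev_ord i)) l (rev_ord i) (rev_ord j))
    (fun i => op_comp (y (rev_ord i)) (fun j => l (rev_ord i) (rev_ord j))
                                      (fun j => z (rev_ord i) (rev_ord j))))).
  by apply: op_comp_congr => i; rewrite rev_compE.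
rewrite (@op_assoc P n x (fun i => k (rev_ord i)) (fun i => y (rev_ord i))
          (fun i j => l (rev_ord i) (rev_ord j)) (fun i j => z (rev_ord i) (rev_ord j))).
apply: (@op_comp_existT _ _ _ (sum_rev_ord k)); first by rewrite rev_compE.
move=> m; rewrite sum_split_rev.
by have -> : cast_ord (esym (sum_rev_ord k)) (cast_ord (sum_rev_ord k) m) = m by apply: val_inj.
Qed.

Definition rev_operad : operad := Operad rev_comp_idl rev_comp_idr rev_comp_assoc.

Lemma rev_operad_compE n (x : P n) k y :
  existT P _ (@op_comp rev_operad n x k y)
  = existT P _ (op_comp x (fun i => k (rev_ord i)) (fun i => y (rev_ord i))).
Proof. exact: rev_compE. Qed.

Definition rev_inputs X (s : S P X) : S P X :=
  existT _ (tag s) ((tagged s).1, fun i => (tagged s).2 (rev_ord i)).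

Lemma rev_inputsK X : involutive (@rev_inputs X).
Proof.
case=> n [x f]; rewrite /rev_inputs /=; do 2 f_equal.
by apply: functional_extensionality => i; rewrite rev_ordK.
Qed.

Lemma S_existT X n n' (e : n = n') (x : P n) (x' : P n') (f : 'I_n -> X) (f' : 'I_n' -> X) :
  existT P n x = existT P n' x' -> (forall i, f i = f' (cast_ord e i)) ->
  existT (fun m => (P m * ('I_m -> X))%type) n (x, f) = existT _ n' (x', f').
Proof.
case: n' / e x' f' => x' f' /(@eq_from_Tagged _ P) <- fE.
do 2 f_equal; apply: functional_extensionality => i; by rewrite fE cast_ord_id.
Qed.

Lemma rev_inputs_mu X (s : S P (S P X)) :
  rev_inputs (mu s) = @mu rev_operad X (rev_inputs (Smap (@rev_inputs X) s)).
Proof.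
case: s => n [x f]; apply: (@S_existT _ _ _ (esym (sum_rev_ord (fun i => tag (f i))))).
  by rewrite rev_operad_compE; apply: op_comp_congr => i /=; rewrite rev_ordK.
by move=> m /=; rewrite sum_split_rev.
Qed.

Lemma rev_operad_monad_iso : monad_iso P rev_operad.
Proof.
exists rev_inputs, rev_inputs.
do !split=> //; [exact: rev_inputsK | exact: rev_inputsK | exact: rev_inputs_mu].
Qed.

End ReverseOperad.

Definition parity (n : nat) : Type := {b : bool | 0 < n}.

Definition bit n (x : parity n) : bool := proj1_sig x.

Definition first_input n (x : parity n) : 'I_n := Ordinal (proj2_sig x).

Lemma bit_inj n : injective (@bit n).
Proof. by case=> a a_gt0 [b b_gt0] /= abE; subst b; rewrite (bool_irrelevance a_gt0 b_gt0). Qed.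

Lemma existT_parity n n' (x : parity n) (x' : parity n') :
  n = n' -> bit x = bit x' -> existT parity n x = existT parity n' x'.
Proof. by move=> nE; subst n' => /bit_inj ->. Qed.

Definition parity_id : parity 1 := exist _ false isT.

Definition parity_comp n (x : parity n) (k : 'I_n -> nat) (y : forall i, parity (k i)) :
    parity (\sum_(i < n) k i) :=
  exist _ (bit x (+) bit (y (first_input x))) (sum_ord_gt0 (proj2_sig (y (first_input x)))).
Arguments parity_comp {n} x k y.

Lemma bit_parity_comp n (x : parity n) k y :
  bit (@parity_comp n x k y) = bit x (+) bit (y (first_input x)).
Proof. by []. Qed.

Lemma parity_comp_idl k (y : parity k) :
  existT parity _ (parity_comp parity_id (fun _ => k) (fun _ => y)) = existT parity k y.
Proof. by apply: existT_parity; first exact: big_ord1. Qed.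

Lemma parity_comp_idr n (x : parity n) :
  existT parity _ (parity_comp x (fun _ => 1%N) (fun _ => parity_id)) = existT parity n x.
Proof. by apply: existT_parity; [rewrite sum1_card card_ord | exact: addbF]. Qed.

Lemma parity_comp_assoc n (x : parity n) (k : 'I_n -> nat) (y : forall i, parity (k i))
    (l : forall i, 'I_(k i) -> nat) (z : forall i j, parity (l i j)) :
  existT parity _ (parity_comp x (fun i => \sum_(j < k i) l i j)
                               (fun i => parity_comp (y i) (l i) (z i)))
  = existT parity _ (parity_comp (parity_comp x k y)
                  (fun m => l (tag (@sum_split n k m)) (tagged (@sum_split n k m)))
                  (fun m => z (tag (@sum_split n k m)) (tagged (@sum_split n k m)))).
Proof.
apply: existT_parity; first by rewrite (big_sum_split _ (fun p => l (tag p) (tagged p))).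
rewrite !bit_parity_comp -addbA.
suff -> : @sum_split n k (first_input (parity_comp x k y))
          = existT _ (first_input x) (first_input (y (first_input x))) by [].
by apply: sum_split_flatten_index; rewrite /flatten_index take0.
Qed.

Definition parity_operad : operad :=
  Operad parity_comp_idl parity_comp_idr parity_comp_assoc.

Definition first_unary_input_only (P : operad) : Prop :=
  forall n (x : P n.+1) (y y' : 'I_n.+1 -> P 1),
    y ord0 = y' ord0 -> op_comp x (fun _ => 1%N) y = op_comp x (fun _ => 1%N) y'.

Lemma operad_iso_first_unary_input_only P Q :
  operad_iso P Q -> first_unary_input_only P -> first_unary_input_only Q.
Proof.
case=> f [g] [_ [[_ gM] [_ fK]]] onlyP n x y y' yE.
apply: (can_inj (fK _)); rewrite !gM; apply: onlyP => /=.
by rewrite yE.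
Qed.

Lemma parity_first_unary_input_only : first_unary_input_only parity_operad.
Proof.
move=> n x y y' yE; apply: bit_inj => /=.
have -> : first_input x = ord0 by exact: val_inj.
by rewrite yE.
Qed.

Lemma rev_parity_not_first_unary_input_only :
  ~ first_unary_input_only (rev_operad parity_operad).
Proof.
pose x : parity 2 := exist _ false isT.
pose y' (i : 'I_2) : parity 1 := exist _ (val i == 1%N) isT.
move/(_ 1%N x (fun _ => parity_id) y' erefl)/(congr1 (existT parity_operad _)).
by rewrite !rev_operad_compE => /(congr1 (fun p => bit (tagged p))).
Qed.

Theorem mainTheorem1 :
  exists P Q : operad, ~ operad_iso P Q /\ monad_iso P Q.
Proof.
exists parity_operad, (rev_operad parity_operad); split; last exact: rev_operad_monad_iso.
move/operad_iso_first_unary_input_only/(_ parity_first_unary_input_only).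
exact: rev_parity_not_first_unary_input_only.
Qed.
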